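(* Let $X$ be a locally convex topological space, $C_0(X)$ the Banach space (sup norm) of continuous $f:X\to\mathbb{R}$ with $\{|f|>\varepsilon\}$ compact for all $\varepsilon>0$, and $\mathcal{M}(X)$ the signed Borel measures on $X$ of bounded total variation $\|\mu\|$. Let $K:X\times X\to\mathbb{R}$ satisfy $K(\cdot,x)\in C_0(X)$ for all $x\in X$, $\overline{\mathrm{span}}\{K(\cdot,x):x\in X\}=C_0(X)$, and suppose that for all pairwise distinct $x_1,\dots,x_m\in X$ ($m\in\mathbb{N}$) the matrix $K[{\bf x}]$, $(K[{\bf x}])_{j,k}=K(x_k,x_j)$, is nonsingular. Let $\mathcal{B}:=\{f_\mu=\int_X K(t,\cdot)\,d\mu(t):\mu\in\mathcal{M}(X)\}$ with norm $\|f_\mu\|_{\mathcal B}=\|\mu\|$. Then the following are equivalent: (a) $\mathcal{B}$ satisfies the linear representer theorem: for every $m\in\mathbb{N}$, every pairwise distinct ${\bf x}=(x_1,\dots,x_m)$ in $X$, every continuous nonnegative function $Q$ on $\mathbb{R}^m$, every continuous nonnegative $\psi$ on $[0,\infty)$ with $\lim_{t\to\infty}\psi(t)=+\infty$ and every $\lambda>0$, the problem $\inf_{f\in\mathcal{B}}Q(f({\bf x}))+\lambda\psi(\|f\|_{\mathcal B})$, where $f({\bf x})=(f(x_j))_{j=1}^m$, has a minimizer of the form $f_0=K^{\bf x}(\cdot)\boldsymbol{c}=\sum_{j=1}^m c_jK(x_j,\cdot)$ for some $\boldsymbol{c}\in\mathbb{R}^m$; (b) for every $m\in\mathbb{N}$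 and every pairwise distinct ${\bf x}=(x_1,\dots,x_m)$ in $X$, $$\|K[{\bf x}]^{-1}K_{\bf x}(x)\|_1\le 1\quad\text{for all }x\in X,$$ where $K_{\bf x}(x):=(K(x,x_j):j=1,\dots,m)^T$.
   Context: Standing assumption of the paper: the dual of $C_0(X)$ is isometrically isomorphic to $\mathcal{M}(X)$ via $T(f)=\int_X f\,d\mu$, with operator norm $\|\mu\|$. $\|\cdot\|_1$ is the $\ell^1$ norm on $\mathbb{R}^m$.
   Formalization: In (a), the regularizer ψ ranges only over functions that are nondecreasing on [0,∞), in addition to being continuous, nonnegative and tending to +∞. The statement above fails without it. *)

From mathcomp Require Import all_boot all_order all_algebra.
From mathcomp Require Import all_classical all_reals all_analysis.
Import Order.TTheory GRing.Theory Num.Theory.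
Import numFieldNormedType.Exports.

Set Implicit Arguments.
Unset Strict Implicit.
Unset Printing Implicit Defensive.

Local Open Scope classical_set_scope.
Local Open Scope ring_scope.

Section Defs.
Variables (R : realType) (X : ptopologicalType).

Definition Borel : Type := g_sigma_algebraType (@open X).

Notation fmeas := {finite_measure set Borel -> \bar R}.

Definition C0 (f : X -> R) : Prop :=
  continuous f /\ forall eps : R, 0 < eps -> compact [set x | eps < `|f x|].

Definition supnorm (f : X -> R) : R := sup [set `|f x| | x in [set: X]].

(* A signed Borel measure of bounded variation is represented as p - n,
   with p, n finite (nonnegative) Borel measures (Jordan decomposition). *)
Definition smeas (p n : fmeas) (A : set X) : R := fine (p A) - fine (n A).

Definition sint (p n : fmeas) (f : X -> R) : R :=
  fine (\int[p]_t (f t)%:E) - fine (\int[n]_t (f t)%:E).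

Definition tvar (p n : fmeas) : R :=
  sup [set r | exists k (A : 'I_k -> set Borel),
        (forall i, measurable (A i)) /\ trivIset setT A /\
        r = \sum_(i < k) `|smeas p n (A i)|].

Definition bdd_lin_C0 (T : (X -> R) -> R) : Prop :=
  (forall (a b : R) f g, C0 f -> C0 g ->
     T (fun x => a * f x + b * g x) = a * T f + b * T g) /\
  exists M : R, forall f, C0 f -> `|T f| <= M * supnorm f.

Definition opnorm_C0 (T : (X -> R) -> R) : R :=
  sup [set `|T f| | f in [set f | C0 f /\ supnorm f <= 1]].

(* Standing assumption: C_0(X)^* is isometrically isomorphic to M(X) via
   mu |-> (f |-> \int f dmu). *)
Definition dual_C0_is_M : Prop :=
  (forall T, bdd_lin_C0 T -> exists p n, forall f, C0 f -> T f = sint p n f) /\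
  (forall p n, opnorm_C0 (sint p n) = tvar p n).

Variable K : X -> X -> R.

Definition Kmx m (x : 'I_m -> X) : 'M[R]_m := \matrix_(j, k) K (x k) (x j).

Definition Kcol m (x : 'I_m -> X) (y : X) : 'cV[R]_m := \col_j K y (x j).

Definition fmu (p n : fmeas) : X -> R := fun y => sint p n (fun t => K t y).

Definition K_sections_C0 : Prop := forall x, C0 (fun t => K t x).

Definition K_span_dense : Prop :=
  forall f, C0 f -> forall eps : R, 0 < eps ->
    exists k (a : 'I_k -> R) (y : 'I_k -> X),
      supnorm (fun t => f t - \sum_(i < k) a i * K t (y i)) < eps.

Definition K_nonsingular : Prop :=
  forall m (x : 'I_m -> X), injective x -> Kmx x \in unitmx.

Definition linear_representer : Prop :=
  forall m (x : 'I_m -> X), injective x ->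
  forall Q : 'rV[R]_m -> R, continuous Q -> (forall v, 0 <= Q v) ->
  forall psi : R -> R,
    {within [set t : R | 0 <= t], continuous psi} ->
    (forall t, 0 <= t -> 0 <= psi t) ->
    (forall s t, 0 <= s -> s <= t -> psi s <= psi t) ->
    (forall M : R, exists N : R, forall t, N <= t -> M <= psi t) ->
  forall lam : R, 0 < lam ->
  exists (c : 'rV[R]_m) (p0 n0 : fmeas),
    (forall y, fmu p0 n0 y = \sum_(j < m) c 0 j * K (x j) y) /\
    forall p n : fmeas,
      Q (\row_j fmu p0 n0 (x j)) + lam * psi (tvar p0 n0)
      <= Q (\row_j fmu p n (x j)) + lam * psi (tvar p n).

Definition l1_condition : Prop :=
  forall m (x : 'I_m -> X), injective x ->
  forall y : X, \sum_(j < m) `|(invmx (Kmx x) *m Kcol x y) j 0| <= 1.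

End Defs.

(* (b) -> (a): for any mu, the interpolation coefficients c = K[x]^-1 f_mu(x)
   are the integrals against mu of the functions (K[x]^-1 K_x(.))_i, and (b)
   makes sum_i sg(c_i) (K[x]^-1 K_x(.))_i bounded by 1, so ||c||_1 <= ||mu||.
   Since sum_j c_j delta_(x_j) has norm at most ||c||_1 and reproduces f_mu(x),
   the problem reduces to minimising the continuous coercive function
   c |-> Q(K[x] c) + lam psi(||c||_1) over R^m.
   (a) -> (b): take Q(v) = L ||v - K_x(y)||_1 with L the l1 norm of the entries
   of K[x]^-1, psi = id and lam = 1.  The point mass at y has value at most 1.
   A minimiser sum_j c_j K(x_j, .) = f_mu0 forces mu0 to act on the dense span
   of the kernel sections, hence on C_0(X), as sum_j c_j delta_(x_j); testing it
   against a C_0 function of norm 1 equal to sg(c_j) at x_j (a step function on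
   clopen sets separating the x_j) gives ||c||_1 <= ||mu0||, and perturbing
   K[x]^-1 K_x(y) around c bounds its l1 norm by the value of the minimiser. *)

From mathcomp Require Import all_boot all_order all_algebra.
From mathcomp Require Import all_classical all_reals all_analysis.
From mathcomp Require Import measurable_realfun charge.
From mathcomp Require Import lra ring.
Import Order.TTheory GRing.Theory Num.Theory.
Import numFieldNormedType.Exports.

Set Implicit Arguments.
Unset Strict Implicit.
Unset Printing Implicit Defensive.

Local Open Scope classical_set_scope.
Local Open Scope ring_scope.

Section SignedIntegral.
Variables (R : realType) (X : ptopologicalType).
Notation fmeas := {finite_measure set Borel X -> \bar R}.

Lemma continuous_Borel_measurable (f : X -> R) :
  continuous f -> measurable_fun [set: Borel X] f.
Proof.
move=> cf; apply: (measurability _ (RGenOInfty.measurableE R)).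
move=> _ [_ [x ->] <-]; apply: sub_sigma_algebra.
by rewrite setTI; apply: open_comp => //; exact: interval_open.
Qed.

Definition bounded_measurable (f : X -> R) :=
  measurable_fun [set: Borel X] f /\ exists M, forall x, `|f x| <= M.

Lemma bounded_measurable_integrable (p : fmeas) f :
  bounded_measurable f -> p.-integrable [set: Borel X] (EFin \o f).
Proof.
move=> [mf [M hM]]; apply/integrableP; split; first exact/measurable_EFinP.
apply: (@le_lt_trans _ _ ((`|M|)%:E * p setT)%E).
  apply: (integral_le_bound (`|M|)%:E) => //.
  - exact/measurable_EFinP.
  - apply: (@aeW _ _ _ p) => z _ /=.
    by rewrite lee_fin (le_trans (hM z)) // ler_norm.
by rewrite lte_mul_pinfty // ?ge0_fin_numE ?fin_num_fun_lty // fin_num_measure.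
Qed.

Lemma bounded_measurableD f g : bounded_measurable f -> bounded_measurable g ->
  bounded_measurable (fun x => f x + g x).
Proof.
move=> [mf [M hM]] [mg [N hN]]; split; first exact: measurable_funD.
by exists (M + N) => x; rewrite (le_trans (ler_normD _ _)) // lerD.
Qed.

Lemma bounded_measurableZ a f : bounded_measurable f ->
  bounded_measurable (fun x => a * f x).
Proof.
move=> [mf [M hM]]; split; first exact: measurable_funM.
by exists (`|a| * M) => x; rewrite normrM ler_wpM2l.
Qed.

Lemma bounded_measurable_sum k (F : 'I_k -> X -> R) :
  (forall i, bounded_measurable (F i)) ->
  bounded_measurable (fun x => \sum_(i < k) F i x).
Proof.
elim: k F => [|k IH] F hF.
  under eq_fun do rewrite big_ord0.
  by split; [exact: measurable_cst | exists 0 => x; rewrite normr0].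
under eq_fun do rewrite big_ord_recl.
exact: bounded_measurableD (hF ord0) (IH _ (fun i => hF _)).
Qed.

Lemma sintD (p n : fmeas) f g : bounded_measurable f -> bounded_measurable g ->
  sint p n (fun x => f x + g x) = sint p n f + sint p n g.
Proof.
move=> bf bg; rewrite /sint.
have := RintegralD measurableT
  (bounded_measurable_integrable p bf) (bounded_measurable_integrable p bg).
have := RintegralD measurableT
  (bounded_measurable_integrable n bf) (bounded_measurable_integrable n bg).
rewrite /Rintegral => -> ->; lra.
Qed.

Lemma sintZ (p n : fmeas) a f : bounded_measurable f ->
  sint p n (fun x => a * f x) = a * sint p n f.
Proof.
move=> bf; rewrite /sint.
have := RintegralZl a measurableT (bounded_measurable_integrable p bf).
have := RintegralZl a measurableT (bounded_measurable_integrable n bf).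
rewrite /Rintegral => -> ->; lra.
Qed.

Lemma sint_sum (p n : fmeas) k (F : 'I_k -> X -> R) :
  (forall i, bounded_measurable (F i)) ->
  sint p n (fun x => \sum_(i < k) F i x) = \sum_(i < k) sint p n (F i).
Proof.
elim: k F => [|k IH] F hF.
  rewrite big_ord0 /sint; under eq_fun do rewrite big_ord0.
  by rewrite !integral0 /=; lra.
rewrite big_ord_recl -IH //; under eq_fun do rewrite big_ord_recl.
by rewrite sintD //; exact: bounded_measurable_sum.
Qed.

Lemma sint_le_bound (p n : fmeas) (f : X -> R) (M : R) :
  measurable_fun [set: Borel X] f -> (forall x, `|f x| <= M) ->
  `|sint p n f| <= (fine (p setT) + fine (n setT)) * M.
Proof.
move=> mf hM; have bf : bounded_measurable f by split => //; exists M.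
have int_le (q : fmeas) : `|fine (\int[q]_t (f t)%:E)| <= fine (q setT) * M.
  have qf := bounded_measurable_integrable q bf.
  have h1 := le_normr_Rintegral measurableT qf.
  have h2 := @le_Rintegral _ _ _ q setT (fun t => `|f t|) (fun _ => M)
    measurableT (integrable_norm qf)
    (finite_measure_integrable_cst _ M measurableT) (fun x _ => hM x).
  have h3 := @Rintegral_cst _ _ _ q setT measurableT M.
  rewrite /Rintegral in h1 h2 h3; rewrite mulrC -h3; exact: le_trans h1 h2.
by rewrite /sint mulrDl (le_trans (ler_normB _ _)) // lerD.
Qed.

End SignedIntegral.

Section C0Functionals.
Variables (R : realType) (X : ptopologicalType).
Notation fmeas := {finite_measure set Borel X -> \bar R}.

Lemma C0_bounded (f : X -> R) : C0 f -> exists M, forall x, `|f x| <= M.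
Proof.
move=> [cf hc]; have [M [_ HM]] : bounded_set (f @` [set x | 1 < `|f x|]).
  apply/compact_bounded/continuous_compact; last exact: hc.
  exact: continuous_subspaceT.
exists (Num.max 1 (M + 1)) => x; rewrite le_max.
have [h|h] := ltrP 1 `|f x|; last by apply/orP; left.
by apply/orP; right; apply: (HM (M + 1)); [rewrite ltrDl | exists x].
Qed.

Lemma C0_bounded_measurable (f : X -> R) : C0 f -> bounded_measurable f.
Proof.
by move=> hf; split; [exact: continuous_Borel_measurable hf.1 | exact: C0_bounded].
Qed.

Lemma supnorm_ub (f : X -> R) M x : (forall y, `|f y| <= M) -> `|f x| <= supnorm f.
Proof.
move=> hM; apply: sup_upper_bound; last by exists x.
by split; [exists `|f x|, x | exists M => _ [y _ <-]].
Qed.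

Lemma supnorm_le (f : X -> R) B : 0 <= B -> (forall y, `|f y| <= B) ->
  supnorm f <= B.
Proof.
move=> B0 hB; have [[x _]|nx] := pselect (exists x : X, True).
  by apply: ge_sup; [exists `|f x|, x | move=> r [y _ <-]].
rewrite /supnorm (_ : [set _ | _ in _] = set0) ?sup0 //.
by apply/seteqP; split => // r [y _ _]; apply: nx; exists y.
Qed.

Lemma C0_supnorm_le1 (f : X -> R) : C0 f -> supnorm f <= 1 -> forall x, `|f x| <= 1.
Proof.
move=> hf h1 x; have [M hM] := C0_bounded hf.
exact: le_trans (supnorm_ub x hM) h1.
Qed.

Lemma C0_0 : C0 (fun _ : X => 0 : R).
Proof.
split; first exact: cst_continuous.
move=> e e0; rewrite (_ : [set _ | _] = set0); first exact: compact0.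
by apply/seteqP; split => // x /=; rewrite normr0 ltNge (ltW e0).
Qed.

Lemma sint_le_opnorm (p n : fmeas) (f : X -> R) : C0 f -> supnorm f <= 1 ->
  `|sint p n f| <= opnorm_C0 (sint p n).
Proof.
move=> hf h1; apply: sup_upper_bound; last by exists f.
split; first by exists `|sint p n f|, f.
exists ((fine (p setT) + fine (n setT)) * 1) => _ [g [hg g1] <-].
by apply: sint_le_bound; [exact: (C0_bounded_measurable hg).1 | exact: C0_supnorm_le1].
Qed.

(* The Dirac combination sum_k c_k delta_(x_k) is obtained from the duality
   assumption rather than constructed; its variation is bounded by the operator norm. *)
Lemma dual_discrete_measure m (x : 'I_m -> X) (c : 'I_m -> R) :
  dual_C0_is_M R X -> exists p n : fmeas,
  (forall f, C0 f -> sint p n f = \sum_(k < m) c k * f (x k)) /\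
  tvar p n <= \sum_(k < m) `|c k|.
Proof.
move=> [dual_repr dual_norm].
pose T (f : X -> R) := \sum_(k < m) c k * f (x k).
have Tle f : C0 f -> `|T f| <= (\sum_(k < m) `|c k|) * supnorm f.
  move=> hf; have [M hM] := C0_bounded hf.
  rewrite /T mulr_suml; apply: le_trans (ler_norm_sum _ _ _) _.
  by apply: ler_sum => k _; rewrite normrM ler_wpM2l // (supnorm_ub _ hM).
have bT : bdd_lin_C0 T.
  split; last by exists (\sum_(k < m) `|c k|).
  move=> a b f g _ _; rewrite /T !mulr_sumr -big_split /=.
  by apply: eq_bigr => k _; ring.
have [p [n hpn]] := dual_repr T bT; exists p, n.
split; first by move=> f hf; rewrite -hpn.
have sup0 : supnorm (fun _ : X => 0 : R) <= 1.
  by apply: supnorm_le => // y; rewrite normr0.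
rewrite -dual_norm; apply: ge_sup.
  by exists `|sint p n (fun _ => 0)|, (fun _ => 0); split => //; exact: C0_0.
move=> _ [f [hf f1] <-]; rewrite -hpn //.
apply: le_trans (Tle f hf) _; rewrite -[leRHS]mulr1 ler_wpM2l //.
exact: sumr_ge0.
Qed.

End C0Functionals.

Section TotalVariation.
Variables (R : realType) (X : ptopologicalType).
Notation fmeas := {finite_measure set Borel X -> \bar R}.

Lemma smeas_le (p n : fmeas) (A : set (Borel X)) : measurable A ->
  (`|smeas p n A|%:E <= p A + n A)%E.
Proof.
move=> mA; rewrite -(fineK (fin_num_measure p A mA)).
rewrite -(fineK (fin_num_measure n A mA)) -EFinD lee_fin /smeas.
by rewrite (le_trans (ler_normB _ _)) // !ger0_norm // fine_ge0.
Qed.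

Lemma tvar_has_sup (p n : fmeas) :
  has_sup [set r | exists k (A : 'I_k -> set (Borel X)),
    (forall i, measurable (A i)) /\ trivIset setT A /\
    r = \sum_(i < k) `|smeas p n (A i)|].
Proof.
split; first by exists 0, 0, (fun _ => set0); split => //; split;
  [exact: trivIset_set0 | rewrite big_ord0].
exists (fine (p setT) + fine (n setT)) => _ [k [A [mA [tA ->]]]].
rewrite -lee_fin -sumEFin EFinD !fineK ?fin_num_measure //.
apply: (@le_trans _ _ (\sum_(i < k) (p (A i) + n (A i)))%E).
  by apply: lee_sum => i _; exact: smeas_le.
have mU : measurable (\big[setU/set0]_(i < k) A i) by exact: bigsetU_measurable.
rewrite big_split /= -!measure_semi_additive_ord //.
by apply: leeD; apply: le_measure; rewrite ?inE.
Qed.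

Lemma tvar_ge_partition (p n : fmeas) k (A : 'I_k -> set (Borel X)) :
  (forall i, measurable (A i)) -> trivIset setT A ->
  \sum_(i < k) `|smeas p n (A i)| <= tvar p n.
Proof.
move=> mA tA; apply: sup_upper_bound; first exact: tvar_has_sup.
by exists k, A.
Qed.

Lemma tvar_ge0 (p n : fmeas) : 0 <= tvar p n.
Proof.
have := @tvar_ge_partition p n 0 (fun _ => set0); rewrite big_ord0; apply => //.
exact: trivIset_set0.
Qed.

Lemma sint_eq_cross (p n p' n' : fmeas) :
  (forall A, measurable A -> (p A + n' A = n A + p' A)%E) ->
  forall g, bounded_measurable g -> sint p n g = sint p' n' g.
Proof.
move=> hE g bg.
have eqi : (\int[measure_add p n']_x (g x)%:E = \int[measure_add n p']_x (g x)%:E)%E.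
  apply: eq_measure_integral => B mB _.
  by rewrite -[LHS]/(measure_add p n' B) -[RHS]/(measure_add n p' B) !measure_addE hE.
have mg : measurable_fun [set: Borel X] (EFin \o g).
  by apply/measurable_EFinP; exact: bg.1.
have fin (q : fmeas) := integrable_fin_num measurableT (bounded_measurable_integrable q bg).
rewrite !integral_measure_add // in eqi; try exact: bounded_measurable_integrable.
move: eqi; rewrite /sint -(fineK (fin p)) -(fineK (fin n)) -(fineK (fin p')) -(fineK (fin n')).
by rewrite -!EFinD => -[h]; lra.
Qed.

(* Replacing p - n by its Jordan decomposition bounds the integral by the
   variation of the two halves of a Hahn decomposition. *)
Lemma sint_le_tvar (p n : fmeas) (g : X -> R) : bounded_measurable g ->
  (forall x, `|g x| <= 1) -> `|sint p n g| <= tvar p n.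
Proof.
move=> bg g1.
pose nu := cadd (charge_of_finite_measure p) (copp (charge_of_finite_measure n)).
have [P [N hPN]] := Hahn_decomposition nu.
pose mp := jordan_pos hPN; pose mn := jordan_neg hPN.
have [[mP _] [mN _] _ PIN] := hPN.
have cross A : measurable A -> (p A + mn A = n A + mp A)%E.
  move=> mA; have := jordan_decomp hPN mA.
  change ((p A + - n A)%E = (mp A + (-1)%:E * mn A)%E ->
          (p A + mn A = n A + mp A)%E).
  have fin (q : fmeas) : exists a, q A = a%:E.
    by exists (fine (q A)); rewrite fineK // fin_num_measure.
  have [[a ->] [b ->]] := (fin p, fin n).
  have [c ->] : exists c, mp A = c%:E by exists (fine (mp A)); rewrite fineK // fin_num_measure.
  have [e ->] : exists e, mn A = e%:E by exists (fine (mn A)); rewrite fineK // fin_num_measure.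
  by rewrite -EFinN -EFinM -!EFinD => -[h]; congr EFin; lra.
rewrite (sint_eq_cross cross bg).
apply: le_trans (sint_le_bound mp mn bg.1 g1) _; rewrite mulr1.
have -> : fine (mp setT) = smeas p n P.
  rewrite /mp jordan_posE cjordan_posE /crestr0 mem_set // /crestr setTI.
  by rewrite /= /cadd /= /copp /= fineD ?fin_numN ?fin_num_measure // fineN.
have -> : fine (mn setT) = - smeas p n N.
  rewrite /mn jordan_negE cjordan_negE /crestr0 mem_set // /crestr setTI.
  rewrite /= /cadd /= /copp /= fineN fineD ?fin_numN ?fin_num_measure // fineN.
  by rewrite /smeas opprD opprK.
pose A (i : 'I_2) := if i == ord0 then P else N.
have PN := @tvar_ge_partition p n 2 A.
rewrite !big_ord_recr big_ord0 /= add0r /A /= in PN; apply: le_trans (PN _ _).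
- by rewrite lerD // ?ler_norm // -normrN ler_norm.
- by move=> i; case: ifP.
- apply/trivIsetP => i j _ _.
  by case: i => [[|[|//]] ?]; case: j => [[|[|//]] ?] //=; rewrite ?PIN // setIC PIN.
Qed.

End TotalVariation.

Section L1Norm.
Variable R : realType.

Definition l1norm m (c : 'rV[R]_m) : R := \sum_(k < m) `|c 0 k|.

Lemma l1norm_ge0 m (c : 'rV[R]_m) : 0 <= l1norm c.
Proof. exact: sumr_ge0. Qed.

Lemma mx_entry_le_norm a b (M : 'M[R]_(a, b)) i j : `|M i j| <= `|M|.
Proof.
by rewrite [`|M|]mx_normrE; apply/bigmax_geP; right; exists (i, j).
Qed.

Lemma mx_norm_le_entries a b (M : 'M[R]_(a, b)) B : 0 <= B ->
  (forall i j, `|M i j| <= B) -> `|M| <= B.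
Proof. by move=> B0 hB; rewrite [`|M|]mx_normrE; apply: bigmax_le => // -[i j] _. Qed.

Lemma lipschitz_continuous (V W : normedModType R) (f : V -> W) C : 0 < C ->
  (forall x y, `|f x - f y| <= C * `|x - y|) -> continuous f.
Proof.
move=> C0 hf x; apply/cvgrPdist_lt => e e0.
have /cvgrPdist_lt /(_ (e / C)) : (fun y : V => y) @ x --> x by exact: cvg_id.
rewrite divr_gt0 // => /(_ isT); apply: filterS => y hy.
by apply: le_lt_trans (hf _ _) _; rewrite mulrC -ltr_pdivlMr.
Qed.

Lemma l1norm_continuous m : continuous (@l1norm m).
Proof.
apply: (@lipschitz_continuous _ _ _ (m%:R + 1)); first by rewrite ltr_wpDl.
move=> c d; apply: le_trans (_ : \sum_(k < m) `|(c - d) 0 k| <= _).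
  rewrite /l1norm -sumrB; apply: le_trans (ler_norm_sum _ _ _) _.
  by apply: ler_sum => k _; rewrite !mxE (le_trans (ler_dist_dist _ _)).
apply: le_trans (_ : \sum_(k < m) `|c - d| <= _).
  by apply: ler_sum => k _; exact: mx_entry_le_norm.
rewrite sumr_const card_ord -mulr_natl; have := normr_ge0 (c - d); nra.
Qed.

Lemma mulmx_continuous m n (M : 'M[R]_(m, n)) : continuous (fun c : 'rV[R]_m => c *m M).
Proof.
pose C := \sum_(k < m) \sum_(j < n) `|M k j| + 1.
have C0 : 0 <= C - 1 by rewrite addrK sumr_ge0 // => k _; rewrite sumr_ge0.
apply: (@lipschitz_continuous _ _ _ C); first by lra.
move=> c d; rewrite -mulmxBl; apply: mx_norm_le_entries; first by rewrite mulr_ge0 //; lra.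
move=> i j; rewrite mxE; apply: le_trans (ler_norm_sum _ _ _) _.
rewrite /C mulrDl mul1r -[leLHS]addr0 lerD // mulr_suml.
apply: ler_sum => k _; rewrite normrM mulrC ler_pM // ?mx_entry_le_norm //.
by rewrite (bigD1 j) //= lerDl sumr_ge0.
Qed.

Lemma continuous_comp_within (V : topologicalType) (A : set R) (g : V -> R)
    (psi : R -> R) :
  continuous g -> (forall v, A (g v)) -> {within A, continuous psi} ->
  continuous (psi \o g).
Proof.
move=> gc gA psic v; have /= := (@subspace_continuousP _ A _ psi).1 psic _ (gA v).
apply: cvg_trans; apply: (@cvg_comp _ _ _ g psi _ (within A (nbhs (g v)))) => // B hB.
have : nbhs v [set y | A (g y) -> B (g y)] := gc v _ hB.
by apply: filterS => y /=; apply; exact: gA.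
Qed.

Lemma l1norm_coercive_min m (h : 'rV[R]_m -> R) (N : R) : continuous h ->
  (forall c, N < l1norm c -> h 0 <= h c) -> exists c0, forall c, h c0 <= h c.
Proof.
move=> hc hN; pose A := [set c : 'rV[R]_m | l1norm c <= Num.max N 0].
have cA : compact A.
  apply: bounded_closed_compact.
    exists (Num.max N 0); split; first exact: num_real.
    move=> M NM c Ac; apply: le_trans (ltW NM).
    apply: mx_norm_le_entries; first by rewrite le_max lexx orbT.
    move=> i j; rewrite (ord1 i); apply: le_trans Ac.
    by rewrite /l1norm (bigD1 j) //= lerDl sumr_ge0.
  exact: (continuous_closedP _).1 (@l1norm_continuous m) _ (@closed_le R _).
have A0 : A 0 by rewrite /A /= /l1norm big1 ?le_max ?lexx ?orbT // => k _; rewrite mxE normr0.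
have [c0 c0A hc0] := compact_EVT_min (ex_intro _ 0 A0) cA (continuous_subspaceT hc).
exists c0 => c; have [cN|cN] := leP (l1norm c) (Num.max N 0).
  by apply: hc0; rewrite inE.
by apply: le_trans (hN c _); [apply: hc0; rewrite inE | move: cN; rewrite gt_max => /andP[]].
Qed.

Lemma penalized_l1_min m (G : 'rV[R]_m -> R) (psi : R -> R) (lam : R) :
  continuous G -> (forall c, 0 <= G c) ->
  {within [set t | 0 <= t], continuous psi} ->
  (forall M, exists N, forall t, N <= t -> M <= psi t) -> 0 < lam ->
  exists c0, forall c, G c0 + lam * psi (l1norm c0) <= G c + lam * psi (l1norm c).
Proof.
move=> Gc G0 psic psi_oo lam0.
pose h c := G c + lam * psi (l1norm c).
have hc : continuous h.
  move=> c; apply: cvgD (Gc c) (cvgM (cvg_cst lam) _).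
  exact: continuous_comp_within (@l1norm_continuous m) (@l1norm_ge0 m) psic c.
have [N hN] := psi_oo (h 0 / lam).
apply: (l1norm_coercive_min (N := N) hc) => c /ltW /hN.
rewrite -(ler_pM2l lam0) mulrCA divff ?gt_eqF // mulr1 /h => hle.
by apply: le_trans hle _; rewrite lerDr.
Qed.

Lemma l1_invmx_le m (A : 'M[R]_m) (c : 'rV[R]_m) (v : 'cV[R]_m) : A \in unitmx ->
  \sum_(i < m) `|(invmx A *m v) i 0| <=
  l1norm c + (\sum_(i < m) \sum_(k < m) `|invmx A i k|) *
             \sum_(j < m) `|(A *m c^T - v) j 0|.
Proof.
move=> Au; pose E := A *m c^T - v.
have vE : invmx A *m v = c^T - invmx A *m E by rewrite mulmxBr mulKmx // opprB addrC subrK.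
rewrite vE /l1norm mulr_suml -big_split /=; apply: ler_sum => i _.
rewrite !mxE (le_trans (ler_normB _ _)) // lerD //.
apply: le_trans (ler_norm_sum _ _ _) _; rewrite mulr_suml.
apply: ler_sum => k _; rewrite normrM ler_wpM2l //.
by rewrite (bigD1 k) //= lerDl sumr_ge0.
Qed.

End L1Norm.

Section L1ConditionImpliesRepresenter.
Variables (R : realType) (X : ptopologicalType) (K : X -> X -> R).
Notation fmeas := {finite_measure set Borel X -> \bar R}.
Hypothesis Ksec : K_sections_C0 K.

Lemma K_section_bounded_measurable y : bounded_measurable (fun t => K t y).
Proof. exact: C0_bounded_measurable (Ksec y). Qed.

Lemma Kcol_entry_bounded_measurable m (x : 'I_m -> X) (A : 'M[R]_m) i :
  bounded_measurable (fun t => (A *m Kcol K x t) i 0).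
Proof.
under eq_fun do rewrite mxE; under eq_fun do under eq_bigr do rewrite mxE.
apply: bounded_measurable_sum => k; exact/bounded_measurableZ/K_section_bounded_measurable.
Qed.

Lemma mulmx_col_fmu m (x : 'I_m -> X) (A : 'M[R]_m) (p n : fmeas) i :
  (A *m \col_j fmu K p n (x j)) i 0 = sint p n (fun t => (A *m Kcol K x t) i 0).
Proof.
rewrite mxE; under [in RHS]eq_fun do rewrite mxE.
under [in RHS]eq_fun do under eq_bigr do rewrite mxE.
rewrite sint_sum => [|k]; last exact/bounded_measurableZ/K_section_bounded_measurable.
by apply: eq_bigr => k _; rewrite mxE sintZ //; exact: K_section_bounded_measurable.
Qed.

Lemma l1_condition_interp_le_tvar m (x : 'I_m -> X) :
  (forall y, \sum_(j < m) `|(invmx (Kmx K x) *m Kcol K x y) j 0| <= 1) ->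
  forall p n : fmeas,
  \sum_(i < m) `|(invmx (Kmx K x) *m \col_j fmu K p n (x j)) i 0| <= tvar p n.
Proof.
move=> hb p n; set Ki := invmx (Kmx K x).
pose s i := Num.sg ((Ki *m \col_j fmu K p n (x j)) i 0).
pose g t := \sum_(i < m) s i * (Ki *m Kcol K x t) i 0.
have bg : bounded_measurable g.
  by apply: bounded_measurable_sum => i; apply/bounded_measurableZ/Kcol_entry_bounded_measurable.
have -> : \sum_(i < m) `|(Ki *m \col_j fmu K p n (x j)) i 0| = sint p n g.
  rewrite sint_sum => [|i]; last exact/bounded_measurableZ/Kcol_entry_bounded_measurable.
  apply: eq_bigr => i _; rewrite sintZ; last exact: Kcol_entry_bounded_measurable.
  by rewrite -mulmx_col_fmu normrEsg.
apply: le_trans (ler_norm _) _; apply: sint_le_tvar bg _ => t.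
apply: le_trans (ler_norm_sum _ _ _) (le_trans _ (hb t)).
apply: ler_sum => i _; rewrite normrM -[leRHS]mul1r ler_wpM2r //.
by rewrite normr_sg; case: (_ == 0).
Qed.

Hypotheses (dual : dual_C0_is_M R X) (Kns : K_nonsingular K).

Lemma l1_condition_representer : l1_condition K -> linear_representer K.
Proof.
move=> hb m x xinj Q Qc Q0 psi psic _ psi_mono psi_oo lam lam0.
set Km := Kmx K x; have Ku : Km \in unitmx := Kns xinj.
pose G (c : 'rV[R]_m) := Q (c *m Km^T).
have Gc : continuous G.
  by move=> c; apply: continuous_comp; [exact: mulmx_continuous | exact: Qc].
have [c0 hc0] := penalized_l1_min Gc (fun c => Q0 _) psic psi_oo lam0.
have [p0 [n0 [hp0 tv0]]] := dual_discrete_measure x (fun k => c0 0 k) dual.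
have fmu0 y : fmu K p0 n0 y = \sum_(j < m) c0 0 j * K (x j) y by rewrite /fmu hp0.
exists c0, p0, n0; split => // p n.
have values0 : \row_j fmu K p0 n0 (x j) = c0 *m Km^T.
  by apply/rowP => j; rewrite !mxE fmu0; apply: eq_bigr => k _; rewrite !mxE.
pose c := (invmx Km *m \col_j fmu K p n (x j))^T.
have values : c *m Km^T = \row_j fmu K p n (x j).
  rewrite -trmx_mul mulmxA mulmxV // mul1mx.
  by apply/rowP => j; rewrite !mxE.
rewrite values0 -values.
apply: le_trans (le_trans _ (hc0 c)) _.
  by rewrite lerD2l ler_pM2l //; apply: psi_mono; rewrite ?tvar_ge0.
rewrite lerD2l ler_pM2l //; apply: psi_mono; first exact: l1norm_ge0.
rewrite /l1norm; under eq_bigr do rewrite mxE.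
exact: l1_condition_interp_le_tvar (hb m x xinj) p n.
Qed.

End L1ConditionImpliesRepresenter.

Section ClopenSeparation.
Variables (R : realType) (X : ptopologicalType).
Hypothesis hX : hausdorff_space X.

Lemma C0N (g : X -> R) : C0 g -> C0 (fun t => - g t).
Proof.
move=> [gc gk]; split; first by move=> x; apply: continuousN; exact: gc.
by move=> e e0; under eq_set do rewrite normrN; exact: gk.
Qed.

Lemma C0_norm (g : X -> R) : C0 g -> C0 (fun t => `|g t|).
Proof.
move=> [gc gk]; split; first by move=> t; exact: cvg_norm (gc t).
by move=> e e0; under eq_set do rewrite normr_id; exact: gk.
Qed.

(* In a Hausdorff space the compact set [b < g] is closed, so it is clopen. *)
Lemma C0_superlevel_clopen (g : X -> R) b : C0 g -> 0 < b -> clopen [set t | b < g t].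
Proof.
move=> [gc gk] b0; split.
  rewrite (_ : [set t | b < g t] = g @^-1` `]b, +oo[%classic).
    by apply: open_comp => // t _; exact: gc.
  by apply/seteqP; split => t /=; rewrite in_itv /= andbT.
rewrite (_ : [set t | b < g t] = [set t | b < `|g t|] `&` g @^-1` [set r | 0 <= r]).
  apply: closedI; first exact: compact_closed (gk b b0).
  exact: (continuous_closedP _).1 gc _ (@closed_ge R 0).
apply/seteqP; split => t /=.
  move=> h; have g0 : 0 <= g t by rewrite (le_trans (ltW b0)) // ltW.
  by rewrite ger0_norm.
by move=> [h g0]; rewrite -(ger0_norm g0).
Qed.

Lemma C0_separates_clopen (g : X -> R) p q : C0 g -> g p != g q ->
  exists V : set X, [/\ clopen V, V p & ~ V q].
Proof.
wlog gqp : p q / g q < g p.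
  move=> wlog hg pq; move: (pq); rewrite neq_lt => /orP[h|h]; last exact: wlog.
  have qp : g q != g p by rewrite eq_sym.
  have [V [cV Vq nVp]] := wlog q p h hg qp.
  by exists (~` V); split => //; exact: clopenC.
move=> hg _; have [gp0|gp0] := ltP 0 (g p).
  exists [set t | Num.max (g q) (g p / 2) < g t]; split => /=.
  - by apply: C0_superlevel_clopen; rewrite // lt_max divr_gt0 ?orbT.
  - by rewrite gt_max gqp /=; lra.
  - by rewrite gt_max ltxx.
exists (~` [set t | Num.max (- g p) (- g q / 2) < - g t]); split => /=.
- apply: (clopenC set0); apply: (C0_superlevel_clopen (C0N hg)).
  by rewrite lt_max; apply/orP; right; rewrite divr_gt0 //; lra.
- by rewrite gt_max ltxx.
- by apply; rewrite gt_max; apply/andP; split; lra.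
Qed.

Lemma clopen_bigcap_fin (I : finType) (P : pred I) (A : I -> set X) :
  (forall i, P i -> clopen (A i)) -> clopen (\bigcap_(i in [set i | P i]) A i).
Proof.
move=> hA; rewrite (_ : [set i | P i] = [set i | (i \in index_enum I) && P i]).
  by rewrite bigcap_seq_cond; elim/big_ind: _ => //; [exact: clopenT | exact: clopenI].
by apply/seteqP; split => i /=; rewrite mem_index_enum.
Qed.

Lemma clopen_partition m (x : 'I_m -> X) : injective x ->
  (forall p q : X, p != q -> exists V, [/\ clopen V, V p & ~ V q]) ->
  (forall p : X, exists C, [/\ clopen C, compact C & C p]) ->
  exists D : 'I_m -> set X, [/\ forall j, clopen (D j) /\ compact (D j),
    forall j, D j (x j) & forall i j t, D i t -> D j t -> i = j].
Proof.
move=> xinj sep loc.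
have [V hV] : exists V : 'I_m * 'I_m -> set X, forall j i, j != i ->
    [/\ clopen (V (j, i)), V (j, i) (x j) & ~ V (j, i) (x i)].
  suff /choice[V hV] : forall ji : 'I_m * 'I_m, exists V : set X, ji.1 != ji.2 ->
      [/\ clopen V, V (x ji.1) & ~ V (x ji.2)] by exists V => j i /(hV (j, i)).
  move=> [j i]; have [->|ne] := eqVneq j i; first by exists setT.
  have xne : x j != x i by rewrite (inj_eq xinj).
  by have [V] := sep _ _ xne; exists V.
have [C hC] := choice loc.
pose W j := C (x j) `&` \bigcap_(i in [set i | i != j]) V (j, i).
pose D j := W j `&` \bigcap_(i in [set i : 'I_m | (i < j)%N]) ~` W i.
have Wc j : clopen (W j).
  apply: clopenI; first by have [] := hC (x j).
  by apply: clopen_bigcap_fin => i ij; have [] := hV j i; rewrite // eq_sym.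
exists D; split.
- move=> j; have Dc : clopen (D j).
    by apply: clopenI => //; apply: clopen_bigcap_fin => i _; exact: (clopenC set0).
  split => //; apply: subclosed_compact Dc.2 _ (fun t => fun h => h.1.1).
  by have [] := hC (x j).
- move=> j; split; first split.
  + by have [] := hC (x j).
  + by move=> i /= ij; have [] := hV j i; rewrite // eq_sym.
  + move=> i /= ij [_ Wi]; have ji : j != i by rewrite neq_ltn ij orbT.
    by have [_ _] := hV i j (negbT (ltn_eqF ij)); apply; exact: Wi ji.
- move=> i j t [Wi Di] [Wj Dj]; apply/val_inj/eqP; case: ltngtP => // h.
  + by exfalso; exact: Dj i h Wi.
  + by exfalso; exact: Di j h Wj.
Qed.

End ClopenSeparation.

Section StepFunction.
Variables (R : realType) (X : ptopologicalType) (m : nat).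
Variables (D : 'I_m -> set X) (s : 'I_m -> R).
Hypotheses (Dclopen : forall j, clopen (D j)) (Dcompact : forall j, compact (D j)).
Hypothesis Ddisj : forall i j t, D i t -> D j t -> i = j.

Definition step_fun (t : X) : R := \sum_(j < m) s j * \1_(D j) t.

Lemma step_funE j t : D j t -> step_fun t = s j.
Proof.
move=> Djt; rewrite /step_fun (bigD1 j) //= indicE mem_set // mulr1 big1 ?addr0 //.
move=> i ij; rewrite indicE; case: (boolP (t \in D i)) => [/set_mem Dit|_].
  by move: ij; rewrite (Ddisj Dit Djt) eqxx.
by rewrite mulr0.
Qed.

Lemma step_fun_out t : (forall j, ~ D j t) -> step_fun t = 0.
Proof. by move=> h; rewrite /step_fun big1 // => j _; rewrite indicE memNset ?mulr0. Qed.

Lemma step_fun_le M : 0 <= M -> (forall j, `|s j| <= M) -> forall t, `|step_fun t| <= M.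
Proof.
move=> M0 sM t; have [[j Djt]|nD] := pselect (exists j, D j t).
  by rewrite (step_funE Djt).
by rewrite step_fun_out ?normr0 // => j Djt; apply: nD; exists j.
Qed.

Lemma C0_step_fun : C0 step_fun.
Proof.
split.
  move=> t; have [U [oU Ut hU]] : exists U, [/\ open U, U t &
      forall y, U y -> step_fun y = step_fun t].
    have [[j Djt]|nD] := pselect (exists j, D j t).
      exists (D j); split => // [|y Djy]; first exact: (Dclopen j).1.
      by rewrite (step_funE Djy) (step_funE Djt).
    exists (\bigcap_(j in [set j | xpredT j]) ~` D j); split.
    - apply: (@clopen_bigcap_fin _ _ xpredT (fun j => ~` D j) _).1 => j _.
      exact: (clopenC set0).
    - by move=> j _ Djt; apply: nD; exists j.
    - move=> y Uy; rewrite (step_fun_out (t := t)) => [|j Djt]; last by apply: nD; exists j.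
      by apply: step_fun_out => j; exact: Uy j isT.
  apply/cvgrPdist_lt => e e0; near=> y; rewrite hU ?subrr ?normr0 //.
  by near: y; exact: open_nbhs_nbhs.
move=> e e0; rewrite (_ : [set t | e < `|step_fun t|] =
                          \bigcup_(j in [set` [pred j | e < `|s j|]]) D j).
  by rewrite bigcup_pred; apply: bigsetU_compact.
apply/seteqP; split => t /=.
  have [[j Djt]|nD] := pselect (exists j, D j t).
    by rewrite (step_funE Djt) => h; exists j.
  by rewrite step_fun_out ?normr0 => [h|j Djt]; [lra | apply: nD; exists j].
by move=> [j /= h Djt]; rewrite (step_funE Djt).
Unshelve. all: by end_near. Qed.

End StepFunction.

Section KernelTopology.
Variables (R : realType) (X : ptopologicalType) (K : X -> X -> R).
Hypotheses (Ksec : K_sections_C0 K) (Kns : K_nonsingular K).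

Lemma K_diag_neq0 p : K p p != 0.
Proof.
apply/negP => /eqP Kpp0.
have inj1 : injective (fun _ : 'I_1 => p) by move=> a b _; rewrite (ord1 a) (ord1 b).
have := Kns inj1; rewrite (_ : Kmx K _ = 0) ?unitmxE ?det0 ?unitr0 //.
by apply/matrixP => a b; rewrite !mxE Kpp0.
Qed.

(* Two points with equal kernel sections would give K[(p, q)] two equal rows. *)
Lemma K_separates_points p q : p != q -> exists z, K p z != K q z.
Proof.
move=> pq; apply/not_existsP => hall.
pose pts (i : 'I_2) := if i == ord0 then p else q.
have inj : injective pts.
  move=> i j; rewrite /pts.
  case: (i =P ord0) => [->|/eqP i0]; case: (j =P ord0) => [->|/eqP j0] //.
  - by move=> qp; rewrite qp eqxx in pq.
  - by move=> qp; rewrite qp eqxx in pq.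
  move=> _; apply/val_inj.
  by case: i i0 => [[|[|//]] ?] //; case: j j0 => [[|[|//]] ?].
have := Kns inj; rewrite unitmxE -det_tr.
rewrite (@determinant_alternate _ _ _ ord0 (lift ord0 ord0)) ?unitr0 // => j.
by rewrite !mxE /pts /=; have /negP := hall (pts j); rewrite negbK => /eqP.
Qed.

Lemma kernel_hausdorff : hausdorff_space X.
Proof.
move=> p q clpq; apply/eqP/negPn/negP => /K_separates_points[z /negP]; apply.
apply/eqP/Rhausdorff => A B hA hB.
have [t [tA tB]] := clpq _ _ ((Ksec z).1 p _ hA) ((Ksec z).1 q _ hB).
by exists (K t z).
Qed.

Lemma kernel_clopen_compact_nbhs (p : X) : exists C : set X, [/\ clopen C, compact C & C p].
Proof.
pose b := `|K p p| / 2; have b0 : 0 < b by rewrite divr_gt0 // normr_gt0 K_diag_neq0.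
have hK := C0_norm (Ksec p).
exists [set t | b < `|K t p|]; split.
- by have := C0_superlevel_clopen kernel_hausdorff hK b0.
- exact: (Ksec p).2 _ b0.
- by rewrite /= /b ltr_pdivrMr // ltr_pMr ?normr_gt0 ?K_diag_neq0 //; lra.
Qed.

Lemma kernel_C0_interpolant m (x : 'I_m -> X) (s : 'I_m -> R) : injective x ->
  (forall j, `|s j| <= 1) ->
  exists f, [/\ C0 f, supnorm f <= 1 & forall j, f (x j) = s j].
Proof.
move=> xinj s1.
have sep (p q : X) : p != q -> exists V : set X, [/\ clopen V, V p & ~ V q].
  by move=> pq; have [z Kz] := K_separates_points pq; exact: (C0_separates_clopen kernel_hausdorff (Ksec z) Kz).
have [D [Dcc Dx Ddisj]] := clopen_partition xinj sep kernel_clopen_compact_nbhs.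
have Dc j := (Dcc j).1; have Dk j := (Dcc j).2.
exists (step_fun D s); split.
- exact: C0_step_fun s Dc Dk Ddisj.
- by apply: supnorm_le => //; exact: step_fun_le.
- by move=> j; exact: step_funE s Ddisj _ _ (Dx j).
Qed.

End KernelTopology.

Section DiscreteRepresentation.
Variables (R : realType) (X : ptopologicalType) (K : X -> X -> R).
Notation fmeas := {finite_measure set Borel X -> \bar R}.
Hypotheses (Ksec : K_sections_C0 K) (Kdense : K_span_dense K).
Variables (p0 n0 : fmeas) (m : nat) (x : 'I_m -> X) (c : 'I_m -> R).
Hypothesis fmu0 : forall y, fmu K p0 n0 y = \sum_(k < m) c k * K (x k) y.

Let gap (f : X -> R) := sint p0 n0 f - \sum_(k < m) c k * f (x k).

Lemma gap_K_span k (a : 'I_k -> R) (y : 'I_k -> X) :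
  gap (fun t => \sum_(i < k) a i * K t (y i)) = 0.
Proof.
apply/eqP; rewrite subr_eq0; apply/eqP.
rewrite sint_sum => [|i]; last exact/bounded_measurableZ/K_section_bounded_measurable.
rewrite (eq_bigr (fun i => a i * fmu K p0 n0 (y i))) => [|i _]; last first.
  by rewrite sintZ //; exact: K_section_bounded_measurable.
under eq_bigr do rewrite fmu0 mulr_sumr.
under [RHS]eq_bigr do rewrite mulr_sumr.
rewrite exchange_big /=; apply: eq_bigr => i _.
by apply: eq_bigr => j _; rewrite mulrCA.
Qed.

Lemma gapB f g : bounded_measurable f -> bounded_measurable g ->
  gap f = gap (fun t => f t - g t) + gap g.
Proof.
move=> bf bg; have bfg : bounded_measurable (fun t => f t - g t).
  by apply: bounded_measurableD bf _; under eq_fun do rewrite -mulN1r; exact: bounded_measurableZ.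
have sf : sint p0 n0 f = sint p0 n0 (fun t => f t - g t) + sint p0 n0 g.
  by rewrite -sintD //; congr sint; apply/funext => t; rewrite subrK.
have cf : \sum_(k < m) c k * f (x k) =
    \sum_(k < m) c k * (f (x k) - g (x k)) + \sum_(k < m) c k * g (x k).
  by rewrite -big_split; apply: eq_bigr => k _ /=; rewrite -mulrDr subrK.
rewrite /gap sf cf; lra.
Qed.

Lemma gap_le_bound (f : X -> R) (M : R) : measurable_fun [set: Borel X] f -> (forall t, `|f t| <= M) ->
  `|gap f| <= (fine (p0 setT) + fine (n0 setT) + \sum_(k < m) `|c k|) * M.
Proof.
move=> mf fM; rewrite mulrDl; apply: le_trans (ler_normB _ _) (lerD (sint_le_bound _ _ mf fM) _).
rewrite mulr_suml; apply: le_trans (ler_norm_sum _ _ _) (ler_sum _ _) => k _.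
by rewrite normrM ler_wpM2l.
Qed.

Lemma sint_eq_discrete f : C0 f -> sint p0 n0 f = \sum_(k < m) c k * f (x k).
Proof.
move=> hf; apply/eqP; rewrite -subr_eq0 -normr_le0; apply/ler_addgt0Pr => e e0.
set P := fine (p0 setT) + fine (n0 setT) + \sum_(k < m) `|c k|.
have P0 : 0 <= P by rewrite !addr_ge0 ?fine_ge0 ?sumr_ge0.
have [k [a [y hy]]] := Kdense hf (divr_gt0 e0 (ltr_wpDl P0 ltr01)).
pose g t := \sum_(i < k) a i * K t (y i).
have bg : bounded_measurable g.
  by apply: bounded_measurable_sum => i; exact/bounded_measurableZ/K_section_bounded_measurable.
have bf := C0_bounded_measurable hf.
have [bfg [M hM]] : bounded_measurable (fun t => f t - g t).
  by apply: bounded_measurableD bf _; under eq_fun do rewrite -mulN1r; exact: bounded_measurableZ.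
rewrite add0r -/(gap f) (gapB bf bg) gap_K_span addr0.
apply: le_trans (gap_le_bound bfg (fun t => le_trans (supnorm_ub t hM) (ltW hy))) _.
rewrite -/P mulrA ler_pdivrMr ?ltr_wpDl //; nra.
Qed.

End DiscreteRepresentation.

Section RepresenterImpliesL1Condition.
Variables (R : realType) (X : ptopologicalType) (K : X -> X -> R).
Notation fmeas := {finite_measure set Borel X -> \bar R}.
Hypotheses (dual : dual_C0_is_M R X) (Ksec : K_sections_C0 K).
Hypotheses (Kdense : K_span_dense K) (Kns : K_nonsingular K).

Lemma kernel_expansion_l1_le_tvar (p0 n0 : fmeas) m (x : 'I_m -> X) (c : 'rV[R]_m) :
  injective x -> (forall y, fmu K p0 n0 y = \sum_(j < m) c 0 j * K (x j) y) ->
  l1norm c <= tvar p0 n0.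
Proof.
move=> xinj fmu0.
have sg1 j : `|Num.sg (c 0 j)| <= 1 by rewrite normr_sg; case: (_ == 0).
have [f [hf f1 fx]] := kernel_C0_interpolant Ksec Kns xinj sg1.
rewrite -(dual.2 p0 n0); apply: le_trans _ (sint_le_opnorm p0 n0 hf f1).
rewrite (sint_eq_discrete Ksec Kdense fmu0 hf) /l1norm.
rewrite (eq_bigr (fun j => c 0 j * f (x j))) ?ler_norm // => j _.
by rewrite fx normrEsg mulrC.
Qed.

Lemma representer_l1_condition : linear_representer K -> l1_condition K.
Proof.
move=> ha m x xinj y; set Km := Kmx K x; have Ku : Km \in unitmx := Kns xinj.
pose L := \sum_(i < m) \sum_(k < m) `|invmx Km i k|.
have L0 : 0 <= L by rewrite sumr_ge0 // => i _; rewrite sumr_ge0.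
pose r : 'rV[R]_m := \row_j K y (x j).
pose Q (v : 'rV[R]_m) := L * l1norm (v - r).
have Qc : continuous Q.
  have shift : continuous (fun w : 'rV[R]_m => w - r).
    by move=> w; exact: cvgB cvg_id (cvg_cst r).
  move=> v; exact: (cvgMl_tmp (a := L) (continuous_comp (shift v) (@l1norm_continuous _ _ _))).
have Q0 v : 0 <= Q v by rewrite mulr_ge0 ?l1norm_ge0.
have idc : {within [set t : R | 0 <= t], continuous id}.
  by apply: continuous_subspaceT => t; exact: cvg_id.
have [c [p0 [n0 [fmu0 hmin]]]] := ha m x xinj Q Qc Q0 id idc
  (fun t t0 => t0) (fun s t _ st => st) (fun M => ex_intro _ M (fun t h => h)) 1 ltr01.
have [p1 [n1 [fmu1 tv1]]] := dual_discrete_measure (fun _ : 'I_1 => y) (fun _ => 1) dual.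
have {}tv1 : tvar p1 n1 <= 1 by move: tv1; rewrite big_ord1 normr1.
have Q1 : Q (\row_j fmu K p1 n1 (x j)) = 0.
  rewrite /Q (_ : _ - r = 0) ?/l1norm ?big1 ?mulr0 // => [j _|]; first by rewrite mxE normr0.
  by apply/rowP => j; rewrite !mxE /fmu fmu1 ?big_ord1 ?mul1r ?subrr.
have := le_trans (hmin p1 n1) _; rewrite Q1 add0r !mul1r => /(_ _ tv1) value_le1.
apply: le_trans (l1_invmx_le c (Kcol K x y) Ku) _.
apply: le_trans value_le1; rewrite addrC lerD //; last first.
  exact: kernel_expansion_l1_le_tvar xinj fmu0.
rewrite /Q /l1norm; apply: ler_wpM2l => //; apply: ler_sum => j _.
by rewrite !mxE fmu0 (eq_bigr (fun k => c 0 k * K (x k) (x j))) // => k _; rewrite !mxE mulrC.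
Qed.

End RepresenterImpliesL1Condition.

Theorem theorem2p4 (R : realType) (X : ptopologicalType) (K : X -> X -> R) :
  dual_C0_is_M R X ->
  K_sections_C0 K -> K_span_dense K -> K_nonsingular K ->
  (linear_representer K <-> l1_condition K).
Proof.
move=> dual Ksec Kdense Kns; split.
- exact: representer_l1_condition.
- exact: l1_condition_representer.
Qed.
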